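(* $A_4(1,0,0,0,0)$ has a unique rational solution of Type A, namely $(f_0,f_1,f_2,f_3,f_4)=(t,0,0,0,0)$.
   Context: The $A_4^{(1)}$ Painlevé equation $A_4(\alpha_0,\dots,\alpha_4)$ is the system for five functions $f_0,\dots,f_4$ of $t$ (indices in $\mathbb{Z}/5\mathbb{Z}$, ${}'=d/dt$): $f_j'=f_j(f_{j+1}-f_{j+2}+f_{j+3}-f_{j+4})+\alpha_j$ ($j=0,\dots,4$), $f_0+\dots+f_4=t$. A rational solution is a tuple of rational functions satisfying it. A rational solution is of Type A if either (A(1)) for some $i$, $f_i$ has a pole at $t=\infty$ and the other $f_j$ are regular there, or (A(2)) for some $i$, $f_i,f_{i+1},f_{i+3}$ have a pole at $t=\infty$ and $f_{i+2},f_{i+4}$ are regular there. *)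

From HB Require Import structures.
From mathcomp Require Import all_boot all_order all_algebra.
Set Implicit Arguments. Unset Strict Implicit. Unset Printing Implicit Defensive.
Import Order.TTheory GRing.Theory Num.Theory.
Local Open Scope ring_scope.

Notation ratfun F := {fraction {poly F}}.
Notation "x %:F" := (@FracField.tofrac _ x).

Section RatFun.
Variable F : fieldType.

Definition rnum (r : ratfun F) : {poly F} := \n_(repr r).
Definition rden (r : ratfun F) : {poly F} := \d_(repr r).

Definition tvar : ratfun F := ('X)%:F.

Definition rderiv (r : ratfun F) : ratfun F :=
  ((rnum r)^`() * rden r - rnum r * (rden r)^`())%:F / ((rden r) ^+ 2)%:F.

Definition regular_at_infty (r : ratfun F) : bool :=
  (size (rnum r) <= size (rden r))%N.
Definition pole_at_infty (r : ratfun F) : bool := ~~ regular_at_infty r.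

(* The A_4^(1) Painleve system, indices in Z/5Z ('I_5 with its cyclic ring). *)
Definition A4_solution (alpha : 'I_5 -> F) (f : 'I_5 -> ratfun F) : Prop :=
  (forall j : 'I_5,
     rderiv (f j) = f j * (f (j + 1) - f (j + 2) + f (j + 3) - f (j + 4))
                    + (alpha j)%:P%:F)
  /\ \sum_(j < 5) f j = tvar.

Definition typeA (f : 'I_5 -> ratfun F) : Prop :=
  exists i : 'I_5,
    (pole_at_infty (f i) /\ forall j, j != i -> regular_at_infty (f j))
    \/ [/\ pole_at_infty (f i), pole_at_infty (f (i + 1)),
           pole_at_infty (f (i + 3)), regular_at_infty (f (i + 2))
         & regular_at_infty (f (i + 4))].

Definition alpha10000 (j : 'I_5) : F := if j == 0 then 1 else 0.
End RatFun.

From HB Require Import structures.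
From mathcomp Require Import all_boot all_order all_algebra.
From mathcomp Require Import ring zify.
Set Implicit Arguments. Unset Strict Implicit. Unset Printing Implicit Defensive.
Import Order.TTheory GRing.Theory Num.Theory.
Local Open Scope ring_scope.

(* Over a common denominator, f_j = P_j / Q, the system reads
   W(Q, P_j) = P_j G_j + alpha_j Q^2 with W the Wronskian and
   G_j = P_(j+1) - P_(j+2) + P_(j+3) - P_(j+4), and f_j is regular at infinity
   iff deg P_j <= deg Q.  Since deg W(Q, U) < deg U + deg Q, a pole in G_j
   forces P_j = 0 when j != 0, and a pole in P_j forces G_j to be regular.
   Propagated through the pole pattern of a Type A solution, this kills every
   P_j with j != 0, unless some pole P_m, m != 0, has G_m = +-(tQ - P_m).  Then
   u = (tQ - P_m) / Q is a rational solution, regular at infinity, of the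
   Riccati equation u' = s u (t - u) + 1, and there is none: writing u = U / Q
   in lowest terms, either deg U = deg Q and the term s t U Q dominates, or
   Q divides Q' - s U, so U = s Q' and the equation linearizes to
   s Q'' = (tQ)', which fails at the coefficient of t^(deg Q) in
   characteristic 0. *)

(* [lia] compares atoms syntactically, while one [size p] may be elaborated
   through different coercion paths of the structure hierarchy. *)
Ltac size_lia :=
  repeat match goal with H : context [size _] |- _ => move: H end;
  repeat match goal with |- context [size ?p] => let n := fresh "n" in set n := size p end;
  lia.

Section Wronskian.
Variable R : comNzRingType.
Implicit Types Q U V g : {poly R}.

Definition wronskian Q U := U^`() * Q - U * Q^`().

Lemma wronskianD Q U V : wronskian Q (U + V) = wronskian Q U + wronskian Q V.
Proof. rewrite /wronskian derivD; ring. Qed.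

Lemma wronskianB Q U V : wronskian Q (U - V) = wronskian Q U - wronskian Q V.
Proof. rewrite /wronskian derivB; ring. Qed.

Lemma wronskian0 Q : wronskian Q 0 = 0.
Proof. by rewrite /wronskian deriv0 !mul0r subr0. Qed.

Lemma wronskian_mulX Q : wronskian Q ('X * Q) = Q ^+ 2.
Proof. rewrite /wronskian derivM derivX; ring. Qed.

Lemma wronskianMl g Q U : wronskian (g * Q) (g * U) = g ^+ 2 * wronskian Q U.
Proof. rewrite /wronskian !derivM; ring. Qed.

End Wronskian.

Section RegularOver.
Variable R : nzRingType.

(* [U \in regular_over Q] says that U / Q is regular at infinity. *)
Definition regular_over (Q : {poly R}) : pred {poly R} :=
  fun U => (size U <= size Q)%N.

Lemma size_regular_over Q U : (U \in regular_over Q) = (size U <= size Q)%N.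
Proof. by []. Qed.

Fact regular_over_submod_closed Q : submod_closed (regular_over Q).
Proof.
split=> [|a U V hU hV]; first by rewrite size_regular_over size_poly0.
rewrite size_regular_over; apply: leq_trans (size_polyD _ _) _.
by rewrite geq_max (leq_trans (size_scale_leq _ _)).
Qed.

HB.instance Definition _ Q :=
  GRing.isSubmodClosed.Build R {poly R} (regular_over Q) (regular_over_submod_closed Q).

End RegularOver.

Section PolesAtInfinity.
Variable R : idomainType.
Variable Q : {poly R}.
Hypothesis Q0 : Q != 0.
Implicit Types U H : {poly R}.

Lemma size_wronskian U : U != 0 ->
  (size (wronskian Q U) + 2 <= size U + size Q)%N.
Proof.
move=> U0; have := lt_size_deriv U0; have := lt_size_deriv Q0.
have := size_polyMleq U^`() Q; have := size_polyMleq U Q^`().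
have := size_polyD (U^`() * Q) (- (U * Q^`())); rewrite size_polyN.
by have := size_poly_gt0 U; have := size_poly_gt0 Q; rewrite Q0 U0 /wronskian; size_lia.
Qed.

Lemma wronskian_mul_pole_eq0 U H : H \notin regular_over Q ->
  wronskian Q U = U * H -> U = 0.
Proof.
rewrite size_regular_over -ltnNge => ltQH eqW; apply/eqP/negPn/negP => U0.
have H0 : H != 0 by apply: contraTneq ltQH => ->; rewrite size_poly0.
have sUH : size (U * H) = (size U + size H).-1 by rewrite size_mul.
have := size_poly_gt0 U; rewrite U0.
by have := size_wronskian U0; rewrite eqW sUH; size_lia.
Qed.

Lemma wronskian_factor_regular U H (c : R) : U \notin regular_over Q ->
  wronskian Q U = U * H + c%:P * Q ^+ 2 -> H \in regular_over Q.
Proof.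
rewrite !size_regular_over -!ltnNge => ltQU eqW; rewrite leqNgt; apply/negP => ltQH.
have U0 : U != 0 by apply: contraTneq ltQU => ->; rewrite size_poly0.
have H0 : H != 0 by apply: contraTneq ltQH => ->; rewrite size_poly0.
have sUH : size (U * H) = (size U + size H).-1 by rewrite size_mul.
have sQ2 : size (Q ^+ 2) = (size Q + size Q).-1 by rewrite expr2 size_mul.
have leCQ := size_polyMleq c%:P (Q ^+ 2); have leC := size_polyC_leq1 c.
by have := size_wronskian U0; rewrite eqW size_polyDl ?sUH; size_lia.
Qed.

End PolesAtInfinity.

Section Riccati.
Variable R : numFieldType.
Implicit Types Q P : {poly R}.

Lemma deriv_mulX_neq_scale_deriv2 (s : R) Q : Q != 0 ->
  ('X * Q)^`() != s *: Q^`()^`().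
Proof.
move=> Q0; set n := (size Q).-1.
have sQ : size Q = n.+1 by rewrite prednK // size_poly_gt0.
apply/eqP => /(congr1 (fun p : {poly R} => p`_n)).
rewrite /= coefZ !coef_deriv coefXM /= (nth_default 0 (_ : size Q <= n.+2)%N);
  last by rewrite sQ.
rewrite !mul0rn mulr0 => /eqP; rewrite mulrn_eq0 /= -lead_coefE lead_coef_eq0.
exact/negP.
Qed.

Variable s : R.
Hypothesis s2 : s ^+ 2 = 1.

Lemma riccati_eq_size_false Q P : Q != 0 -> size P = size Q ->
  wronskian Q P = s *: (P * ('X * Q - P)) + Q ^+ 2 -> False.
Proof.
move=> Q0 eqPQ eqW.
have s0 : s != 0 by apply: contra_eq_neq s2 => ->; rewrite expr0n eq_sym oner_neq0.
have P0 : P != 0 by rewrite -size_poly_eq0 eqPQ size_poly_eq0.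
have sPQ : size (s *: (P * Q * 'X)) = (size P + size Q)%N.
  rewrite size_scale // size_mulX ?mulf_neq0 // size_mul //.
  by rewrite prednK // addn_gt0 size_poly_gt0 P0.
have sP2 : size (P ^+ 2) = (size P + size P).-1 by rewrite expr2 size_mul.
have sQ2 : size (Q ^+ 2) = (size Q + size Q).-1 by rewrite expr2 size_mul.
have ltQ2 : (size (Q ^+ 2 - s *: P ^+ 2)%R < size P + size Q)%N.
  have := size_polyD (Q ^+ 2) (- (s *: P ^+ 2)); have := size_scale_leq s (P ^+ 2).
  by rewrite size_polyN; have := size_poly_gt0 Q; rewrite Q0; size_lia.
have := size_wronskian Q0 P0; rewrite eqW.
have -> : s *: (P * ('X * Q - P)) + Q ^+ 2 = s *: (P * Q * 'X) + (Q ^+ 2 - s *: P ^+ 2).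
  by rewrite -!mul_polyC; ring.
by rewrite size_polyDl sPQ //; size_lia.
Qed.

Lemma riccati_coprime_deriv Q P : Q != 0 -> coprimep Q P -> (size P < size Q)%N ->
  wronskian Q P = s *: (P * ('X * Q - P)) + Q ^+ 2 -> Q^`() = s *: P.
Proof.
move=> Q0 copQP ltPQ eqW; apply/eqP; rewrite -subr_eq0; apply/eqP.
have eqPQ : P * (Q^`() - s *: P) = Q * (P^`() - s *: ('X * P) - Q).
  apply/eqP; rewrite -subr_eq0; apply/eqP.
  transitivity (s *: (P * ('X * Q - P)) + Q ^+ 2 - wronskian Q P).
    by rewrite /wronskian -!mul_polyC; ring.
  by rewrite eqW subrr.
have : Q %| Q^`() - s *: P by rewrite -(Gauss_dvdpr _ copQP) eqPQ dvdp_mulIl.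
apply: contraTeq => nz; rewrite gtNdvdp //.
apply: leq_ltn_trans (size_polyD _ _) _; rewrite size_polyN gtn_max lt_size_deriv //=.
exact: leq_ltn_trans (size_scale_leq _ _) ltPQ.
Qed.

Lemma riccati_no_regular_sol Q P : Q != 0 -> P \in regular_over Q ->
  wronskian Q P = s *: (P * ('X * Q - P)) + Q ^+ 2 -> False.
Proof.
wlog copQP : Q P / coprimep Q P => [reduce Q0 regP eqW | Q0 regP eqW].
  have copQP := coprimep_div_gcd (q := P) (introT orP (or_introl Q0)).
  have g0 : gcdp Q P != 0 by rewrite gcdp_eq0 negb_and Q0.
  have eqQg : Q = Q %/ gcdp Q P * gcdp Q P by rewrite divpK ?dvdp_gcdl.
  have eqPg : P = P %/ gcdp Q P * gcdp Q P by rewrite divpK ?dvdp_gcdr.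
  move: copQP g0 eqQg eqPg; set g := gcdp Q P; set Q1 := Q %/ g; set P1 := P %/ g.
  clearbody g Q1 P1 => copQP g0 eqQg eqPg.
  have Q10 : Q1 != 0 by apply: contra_neq Q0; rewrite eqQg => ->; rewrite mul0r.
  apply: (reduce Q1 P1) => //.
  - have [->|P10] := eqVneq P1 0; first by rewrite rpred0.
    move: regP; rewrite !size_regular_over eqQg eqPg !size_mul //.
    by have := size_poly_gt0 g; rewrite g0; size_lia.
  - apply: (mulfI (expf_neq0 2 g0)).
    rewrite -wronskianMl mulrC [g * P1]mulrC -eqQg -eqPg eqW eqQg eqPg.
    by rewrite -!mul_polyC; ring.
have [eqPQ | ltPQ] : size P = size Q \/ (size P < size Q)%N.
  by move: regP; rewrite size_regular_over leq_eqVlt => /orP[/eqP|]; [left | right].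
  exact: riccati_eq_size_false eqPQ eqW.
have eqPQ' : P = s *: Q^`().
  by rewrite (riccati_coprime_deriv Q0 copQP ltPQ eqW) scalerA -expr2 s2 scale1r.
have : Q * (('X * Q)^`() - s *: Q^`()^`()) = 0.
  transitivity (s *: (P * ('X * Q - P)) + Q ^+ 2 - wronskian Q P
                + (1 - s ^+ 2) *: ('X * Q * Q^`() - s *: Q^`() ^+ 2)).
    rewrite eqPQ' /wronskian derivZ !derivM derivX -!mul_polyC polyCB polyC1 rmorphXn /=.
    ring.
  by rewrite eqW subrr add0r s2 subrr scale0r.
move/eqP; rewrite mulf_eq0 (negPf Q0) subr_eq0 /=; apply/negP.
exact: deriv_mulX_neq_scale_deriv2.
Qed.

End Riccati.

Lemma ord5P (k : 'I_5) : k = 0 \/ k = 1 \/ k = 2 \/ k = 3 \/ k = 4.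
Proof.
case: k => [[|[|[|[|[|//]]]]] ?];
  [left | right; left | do 2 right; left | do 3 right; left | do 4 right];
  exact: val_inj.
Qed.

Section AlternatingSum.
Variable V : zmodType.
Implicit Type g : 'I_5 -> V.

Definition alt_sum g j := g (j + 1) - g (j + 2) + g (j + 3) - g (j + 4).

Lemma alt_sum_shift g i :
  [/\ alt_sum g (i + 1) = g (i + 2) - g (i + 3) + g (i + 4) - g i,
      alt_sum g (i + 2) = g (i + 3) - g (i + 4) + g i - g (i + 1),
      alt_sum g (i + 3) = g (i + 4) - g i + g (i + 1) - g (i + 2) &
      alt_sum g (i + 4) = g i - g (i + 1) + g (i + 2) - g (i + 3)].
Proof.
by case: i => [[|[|[|[|[|//]]]]] ?]; split;
  congr (_ - _ + _ - _); congr g; apply: val_inj.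
Qed.

Lemma sum_ord5_shift g i :
  \sum_j g j = g i + g (i + 1) + g (i + 2) + g (i + 3) + g (i + 4).
Proof.
rewrite (reindex_inj (addrI i)) /= !big_ord_recr big_ord0 /= add0r.
congr (_ + _ + _ + _ + _); congr g; first rewrite -[RHS]addr0.
all: by congr (i + _); apply: val_inj.
Qed.

End AlternatingSum.

Lemma alt_sum_raddf (U V : zmodType) (h : {additive U -> V}) (g : 'I_5 -> U) j :
  alt_sum (h \o g) j = h (alt_sum g j).
Proof. by rewrite /alt_sum !(raddfB, raddfD). Qed.

Lemma alt_sum_mulr (R : pzRingType) (g : 'I_5 -> R) c j :
  alt_sum (fun k => g k * c) j = alt_sum g j * c.
Proof. by rewrite /alt_sum !(mulrBl, mulrDl). Qed.

Definition typeA_over (R : nzRingType) (Q : {poly R}) (P : 'I_5 -> {poly R}) :=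
  exists i, (P i \notin regular_over Q /\ forall j, j != i -> P j \in regular_over Q)
    \/ [/\ P i \notin regular_over Q, P (i + 1) \notin regular_over Q,
           P (i + 3) \notin regular_over Q, P (i + 2) \in regular_over Q
         & P (i + 4) \in regular_over Q].

Section A4Polynomial.
Variable R : numFieldType.
Variable Q : {poly R}.
Variable P : 'I_5 -> {poly R}.
Hypothesis Q0 : Q != 0.
Hypothesis A4P : forall j,
  wronskian Q (P j) = P j * alt_sum P j + (alpha10000 R j)%:P * Q ^+ 2.
Hypothesis sumP : \sum_j P j = 'X * Q.

Lemma A4_wronskian_neq0 j : j != 0 -> wronskian Q (P j) = P j * alt_sum P j.
Proof. by move=> j0; rewrite A4P /alpha10000 (negPf j0) mul0r addr0. Qed.

Lemma A4_alt_sum_regular j :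
  P j \notin regular_over Q -> alt_sum P j \in regular_over Q.
Proof. by move=> poleP; apply: (wronskian_factor_regular Q0 poleP (A4P j)). Qed.

Lemma A4_pole_factor_eq0 j : j != 0 -> alt_sum P j \notin regular_over Q -> P j = 0.
Proof.
by move=> j0 poleA; apply: (wronskian_mul_pole_eq0 Q0 poleA); rewrite A4_wronskian_neq0.
Qed.

Lemma A4_alt_sum_complement_false m (s : R) : m != 0 -> s ^+ 2 = 1 ->
  P m \notin regular_over Q -> alt_sum P m = s *: ('X * Q - P m) -> False.
Proof.
move=> m0 s2 poleP eqA; set U := 'X * Q - P m.
have regU : U \in regular_over Q.
  by rewrite -[U]scale1r -s2 expr2 -scalerA -eqA rpredZ ?A4_alt_sum_regular.
apply: (riccati_no_regular_sol (s := - s)) Q0 regU _; first by rewrite sqrrN.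
rewrite wronskianB wronskian_mulX A4_wronskian_neq0 // eqA.
by rewrite /U -!mul_polyC polyCN; ring.
Qed.

Lemma A4_single_pole i : P i \notin regular_over Q ->
  (forall j, j != i -> P j \in regular_over Q) ->
  i = 0 /\ forall j, j != 0 -> P j = 0.
Proof.
move=> poleP regP.
have reg k : k != 0 -> P (i + k) \in regular_over Q.
  by move=> k0; apply: regP; rewrite -[X in _ != X]addr0 (inj_eq (addrI i)).
have [a1 a2 a3 a4] := alt_sum_shift P i.
have vanish k : k != 0 -> i + k != 0 -> P (i + k) = 0.
  case: (ord5P k) => [|[|[|[|]]]] -> // _ nz; apply: A4_pole_factor_eq0 nz _.
  - by rewrite a1 rpredBl // rpredD ?rpredB ?reg.
  - by rewrite a2 rpredBr ?reg // rpredDl // rpredB ?reg.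
  - by rewrite a3 rpredBr ?reg // rpredDr ?reg // rpredBl ?reg.
  - by rewrite a4 rpredBr ?reg // rpredDr ?reg // rpredBr ?reg.
have [i0 | i0] := eqVneq i 0.
  by subst i; split=> // j j0; have := vanish j j0; rewrite add0r; apply.
have complement (s : R) : s ^+ 2 = 1 ->
    alt_sum P i = s *: (\sum_j P j - P i) -> False.
  by move=> s2; rewrite sumP; apply: (A4_alt_sum_complement_false i0 s2 poleP).
rewrite /alt_sum (sum_ord5_shift _ i) in complement; exfalso.
case: (ord5P i) i0 vanish complement => [|[|[|[|]]]] -> // _ vanish complement.
- apply: (complement (-1)); first by rewrite sqrrN expr1n.
  by rewrite (vanish 1) ?(vanish 2) ?(vanish 3) // scaleN1r; ring.
- apply: (complement 1); first by rewrite expr1n.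
  by rewrite (vanish 1) ?(vanish 2) ?(vanish 4) // scale1r; ring.
- apply: (complement (-1)); first by rewrite sqrrN expr1n.
  by rewrite (vanish 1) ?(vanish 3) ?(vanish 4) // scaleN1r; ring.
- apply: (complement 1); first by rewrite expr1n.
  by rewrite (vanish 2) ?(vanish 3) ?(vanish 4) // scale1r; ring.
Qed.

Lemma A4_triple_pole i :
  P i \notin regular_over Q -> P (i + 1) \notin regular_over Q ->
  P (i + 3) \notin regular_over Q -> P (i + 2) \in regular_over Q ->
  P (i + 4) \in regular_over Q -> False.
Proof.
move=> pole0 pole1 pole3 reg2 reg4; have [a1 a2 a3 a4] := alt_sum_shift P i.
have reg3 := A4_alt_sum_regular pole3.
have vanish2 : i + 2 != 0 -> P (i + 2) = 0.
  move=> nz; apply: A4_pole_factor_eq0 nz _.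
  have -> : alt_sum P (i + 2) = P (i + 3) - (P (i + 2) + alt_sum P (i + 3)).
    by rewrite a2 a3; ring.
  by rewrite rpredBr // rpredD.
have vanish4 : i + 4 != 0 -> P (i + 4) = 0.
  move=> nz; apply: A4_pole_factor_eq0 nz _.
  have -> : alt_sum P (i + 4) = P (i + 4) - alt_sum P (i + 3) - P (i + 3).
    by rewrite a4 a3; ring.
  by rewrite rpredBl // rpredB.
have complement m (s : R) : m != 0 -> s ^+ 2 = 1 -> P m \notin regular_over Q ->
    alt_sum P m = s *: (\sum_j P j - P m) -> False.
  by rewrite sumP; apply: A4_alt_sum_complement_false.
rewrite (sum_ord5_shift _ i) in complement.
have [i2 | nz2] := eqVneq (i + 2) 0.
  move/eqP: i2; rewrite addr_eq0 => /eqP i2; subst i.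
  have z4 := vanish4 isT.
  have z03 : P (-2) + P (-2 + 3) = 0.
    apply: (wronskian_mul_pole_eq0 Q0 (H := P (-2 + 1) - P (-2 + 2))).
      by rewrite rpredBr.
    by rewrite wronskianD !A4_wronskian_neq0 // a3 /alt_sum z4; ring.
  apply: (complement (-2 + 1) 1) => //; first by rewrite expr1n.
  by rewrite a1 z4 scale1r; move/eqP: z03; rewrite addr_eq0 => /eqP ->; ring.
have z2 := vanish2 nz2.
have [i4 | nz4] := eqVneq (i + 4) 0.
  move/eqP: i4; rewrite addr_eq0 => /eqP i4; subst i.
  have z13 : P (-4 + 1) + P (-4 + 3) = 0.
    apply: (wronskian_mul_pole_eq0 Q0 (H := P (-4 + 4) - P (-4))).
      by rewrite rpredBl.
    by rewrite wronskianD !A4_wronskian_neq0 // a1 a3 z2; ring.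
  apply: (complement (-4) (-1)) => //; first by rewrite sqrrN expr1n.
  by rewrite /alt_sum z2 scaleN1r; move/eqP: z13; rewrite addr_eq0 => /eqP ->; ring.
have z4 := vanish4 nz4.
have [i0 | nz0] := eqVneq i 0.
  subst i; apply: (complement (0 + 1) (-1)) => //; first by rewrite sqrrN expr1n.
  by rewrite a1 z2 z4 scaleN1r; ring.
apply: (complement i 1) => //; first by rewrite expr1n.
by rewrite /alt_sum z2 z4 scale1r; ring.
Qed.

Lemma A4_typeA_over : typeA_over Q P -> P 0 = 'X * Q /\ forall j, j != 0 -> P j = 0.
Proof.
case=> i [[poleP regP] | [pole0 pole1 pole3 reg2 reg4]]; last first.
  by case: (A4_triple_pole pole0 pole1 pole3 reg2 reg4).
have [_ vanish] := A4_single_pole poleP regP; split=> //.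
by rewrite -sumP (bigD1 0) //= big1 ?addr0.
Qed.

End A4Polynomial.

Section RationalFunctions.
Variable F : fieldType.
Implicit Types p q : {poly F}.

Lemma frac_eqE p1 q1 p2 q2 : q1 != 0 -> q2 != 0 ->
  (p1%:F / q1%:F == p2%:F / q2%:F) = (p1 * q2 == p2 * q1).
Proof. by move=> q10 q20; rewrite eqr_div ?tofrac_eq0 // -!tofracM tofrac_eq. Qed.

Lemma rden_neq0 (r : ratfun F) : rden r != 0.
Proof. exact: denom_ratioP. Qed.

Lemma ratfun_numden (r : ratfun F) : r = (rnum r)%:F / (rden r)%:F.
Proof.
rewrite /rnum /rden; set x := repr r.
have -> : r = (\pi_({fraction {poly F}}) x)%qT by rewrite /x reprK.
have dx0 : (\d_x)%:F != 0 by rewrite tofrac_eq0 denom_ratioP.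
apply: (mulIf dx0); rewrite divfK // [_%:F]piE [X in _ = X]piE.
rewrite -[X in X = _]FracField.pi_mul; apply/eqmodP; rewrite /= FracField.equivfE /=.
rewrite /FracField.mulf !numden_Ratio ?oner_neq0 ?mulf_neq0 ?oner_neq0 ?denom_ratioP //.
by rewrite !mulr1 mulrC.
Qed.

Lemma ratfun_frac_eq (r : ratfun F) p q : q != 0 ->
  r = p%:F / q%:F -> rnum r * q = p * rden r.
Proof.
by move=> q0 eqr; apply/eqP; rewrite -frac_eqE ?rden_neq0 // -ratfun_numden eqr.
Qed.

Lemma rderiv_frac p q : q != 0 ->
  rderiv (p%:F / q%:F) = (wronskian q p)%:F / (q ^+ 2)%:F.
Proof.
move=> q0; have := ratfun_frac_eq q0 (erefl (p%:F / q%:F)); rewrite /rderiv.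
set n := rnum _; set d := rden _ => eqnd; have d0 : d != 0 := rden_neq0 _.
apply/eqP; rewrite frac_eqE ?expf_neq0 // -subr_eq0; apply/eqP.
transitivity (d * q * ((n * q)^`() - (p * d)^`())
              - (q^`() * d + d^`() * q) * (n * q - p * d)).
  by rewrite /wronskian !derivM; ring.
by rewrite eqnd !subrr !mulr0 subrr.
Qed.

Lemma regular_at_infty_frac p q : q != 0 ->
  regular_at_infty (p%:F / q%:F) = (p \in regular_over q).
Proof.
move=> q0; have := ratfun_frac_eq q0 (erefl (p%:F / q%:F)); rewrite /regular_at_infty.
set n := rnum _; set d := rden _ => eqnd; have d0 : d != 0 := rden_neq0 _.
rewrite size_regular_over.
have [p0 | p0] := eqVneq p 0.
  move: eqnd; rewrite p0 mul0r => /eqP; rewrite mulf_eq0 (negPf q0) orbF => /eqP ->.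
  by rewrite !size_poly0.
have n0 : n != 0 by apply: contra_eq_neq eqnd => ->; rewrite mul0r eq_sym mulf_neq0.
have := congr1 (fun x : {poly F} => size x) eqnd; rewrite /= !size_mul //.
move=> eqs; rewrite -!size_poly_gt0 in n0 q0 p0 d0.
by apply/idP/idP; size_lia.
Qed.

Lemma ratfun_common_denom (I : finType) (f : I -> ratfun F) :
  exists Q (P : I -> {poly F}), Q != 0 /\ forall j, f j = (P j)%:F / Q%:F.
Proof.
exists (\prod_j rden (f j)), (fun j => rnum (f j) * \prod_(k | k != j) rden (f k)).
have Q0 : \prod_j rden (f j) != 0 by apply/prodf_neq0 => j _; apply: rden_neq0.
split=> // j; rewrite {1}[f j]ratfun_numden; apply/eqP; rewrite frac_eqE ?rden_neq0 //.
by rewrite (bigD1 j) //=; apply/eqP; ring.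
Qed.

Section System.
Variables (f : 'I_5 -> ratfun F) (Q : {poly F}) (P : 'I_5 -> {poly F}).
Hypothesis Q0 : Q != 0.
Hypothesis eqf : forall j, f j = (P j)%:F / Q%:F.

Lemma A4_solution_frac (alpha : 'I_5 -> F) : A4_solution alpha f <->
  (forall j, wronskian Q (P j) = P j * alt_sum P j + (alpha j)%:P * Q ^+ 2)
  /\ \sum_j P j = 'X * Q.
Proof.
have QF0 : Q%:F != 0 by rewrite tofrac_eq0.
have Q2 : (Q ^+ 2)%:F != 0 by rewrite rmorphXn expf_neq0.
have eq_over_Q2 a b : (a%:F / (Q ^+ 2)%:F = b%:F / (Q ^+ 2)%:F) <-> a = b.
  split=> [/(mulIf (invr_neq0 Q2))/eqP | -> //].
  by rewrite tofrac_eq => /eqP.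
have eqA j : rderiv (f j) = f j * alt_sum f j + (alpha j)%:P%:F <->
    wronskian Q (P j) = P j * alt_sum P j + (alpha j)%:P * Q ^+ 2.
  have -> : alt_sum f j = (alt_sum P j)%:F / Q%:F.
    by rewrite -(alt_sum_raddf (@tofrac _)) -alt_sum_mulr /alt_sum !eqf.
  rewrite !eqf rderiv_frac //.
  have -> : (P j)%:F / Q%:F * ((alt_sum P j)%:F / Q%:F) + ((alpha j)%:P)%:F
          = (P j * alt_sum P j + (alpha j)%:P * Q ^+ 2)%:F / (Q ^+ 2)%:F.
    move: (alt_sum P j) => A; rewrite !rmorphXn rmorphD !rmorphM -expr2.
    by rewrite mulf_div -expr2 -[X in _ + X](mulfK Q2) rmorphXn -mulrDl.
  exact: eq_over_Q2.
have eqS : \sum_j f j = tvar F <-> \sum_j P j = 'X * Q.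
  under eq_bigr do rewrite eqf.
  rewrite -mulr_suml -rmorph_sum /tvar -[('X)%:F]divr1 -tofrac1.
  by rewrite (rwP eqP) frac_eqE ?oner_neq0 // mulr1 -(rwP eqP).
by split=> -[eqs sumf]; split=> [j | ]; by [apply/eqA/eqs | apply/eqS].
Qed.

Lemma typeA_frac : typeA f <-> typeA_over Q P.
Proof.
have reg j : regular_at_infty (f j) = (P j \in regular_over Q).
  by rewrite eqf regular_at_infty_frac.
rewrite /typeA /typeA_over /pole_at_infty.
split=> -[i [[poleI regJ] | [pole0 pole1 pole3 reg2 reg4]]]; exists i.
- by left; split=> [|j /regJ]; rewrite -reg.
- by right; rewrite -!reg.
- by left; split=> [|j /regJ]; rewrite reg.
- by right; rewrite !reg.
Qed.

End System.

Lemma A4_typeA_tvar (f : 'I_5 -> ratfun F) : f 0 = tvar F ->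
  (forall j, j != 0 -> f j = 0) -> A4_solution (@alpha10000 F) f /\ typeA f.
Proof.
move=> f0 vanish; pose P (j : 'I_5) : {poly F} := if j == 0 then 'X else 0.
have eqf j : f j = (P j)%:F / 1%:F.
  rewrite tofrac1 divr1 /P; case: eqP => [-> | /eqP j0]; first by rewrite f0.
  by rewrite vanish // tofrac0.
split.
- apply/(A4_solution_frac (oner_neq0 _) eqf); split=> [j | ]; last first.
    by rewrite (bigD1 0) //= big1 ?addr0 ?mulr1 // => j /negPf j0; rewrite /P j0.
  rewrite /alt_sum /P /alpha10000.
  case: eqP => [-> | _] /=; last by rewrite wronskian0 polyC0 !mul0r addr0.
  by rewrite /wronskian derivX -polyC1 derivC polyC1; ring.
- apply/(typeA_frac (oner_neq0 _) eqf); exists 0; left; split.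
    by rewrite /P /= size_regular_over size_polyX size_poly1.
  by move=> j /negPf j0; rewrite /P j0 rpred0.
Qed.

End RationalFunctions.

Lemma A4_typeA_eq_tvar (F : numFieldType) (f : 'I_5 -> ratfun F) :
  A4_solution (@alpha10000 F) f -> typeA f ->
  f 0 = tvar F /\ forall j, j != 0 -> f j = 0.
Proof.
have [Q [P [Q0 eqf]]] := ratfun_common_denom f.
move=> /(A4_solution_frac Q0 eqf) [A4P sumP] /(typeA_frac Q0 eqf) typeAP.
have [eqP0 vanish] := A4_typeA_over Q0 A4P sumP typeAP.
split=> [|j j0]; rewrite eqf; first by rewrite eqP0 tofracM mulfK ?tofrac_eq0.
by rewrite vanish // tofrac0 mul0r.
Qed.

Theorem lemma3p4 (F : numClosedFieldType) (f : 'I_5 -> ratfun F) :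
  (A4_solution (@alpha10000 F) f /\ typeA f) <->
  (f 0 = tvar F /\ forall j : 'I_5, j != 0 -> f j = 0).
Proof.
split=> [[solf typeAf] | [f0 vanish]].
- exact: A4_typeA_eq_tvar.
- exact: A4_typeA_tvar.
Qed.
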